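(* For integers $\ell\ge 3$ and $r\ge 1$, let $\mathcal{C}_\ell$ be the class of all cycles of length at least $\ell$. Then $R_{r\text{-loc}}(\mathcal{C}_\ell)\le 2\ell r$.
   Context: An edge colouring of a graph is an $r$-local colouring if the edges incident to any vertex are coloured with at most $r$ colours (the total number of colours is not restricted). For a class of graphs $\mathcal{H}$, the $r$-local Ramsey number $R_{r\text{-loc}}(\mathcal{H})$ is the smallest $n$ such that every $r$-local colouring of the edges of $K_n$ contains a monochromatic copy of some graph $H\in\mathcal{H}$. *)

From mathcomp Require Import all_boot.
Set Implicit Arguments. Unset Strict Implicit. Unset Printing Implicit Defensive.

(* An edge colouring of K_n on vertex set 'I_n, colours in nat (the number of
   colours is unrestricted).  It is given as a symmetric function; its value on
   the diagonal (non-edges) is irrelevant and never used. *)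
Definition edge_colouring (n : nat) (c : 'I_n -> 'I_n -> nat) : Prop :=
  forall x y, c x y = c y x.

Definition r_local (n r : nat) (c : 'I_n -> 'I_n -> nat) : Prop :=
  forall v : 'I_n, size (undup [seq c v u | u <- enum 'I_n & u != v]) <= r.

Definition mono_cycle (n k : nat) (c : 'I_n -> 'I_n -> nat) : Prop :=
  exists (s : k.-tuple 'I_n) (col : nat),
    uniq s /\ forall i : 'I_k, c (tnth s i) (tnth s (ordS i)) = col.

Definition has_mono_cycle_ge (n l : nat) (c : 'I_n -> 'I_n -> nat) : Prop :=
  exists k, l <= k /\ mono_cycle k c.

Definition loc_ramsey_prop (r l n : nat) : Prop :=
  forall c : 'I_n -> 'I_n -> nat,
    edge_colouring c -> r_local r c -> has_mono_cycle_ge l c.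

(* R_{r-loc}(C_l) <= N, i.e. the least n with the property is at most N. *)
Definition loc_ramsey_le (r l N : nat) : Prop :=
  exists n, n <= N /\ loc_ramsey_prop r l n.

From Pilot Require Import Defs.
From mathcomp Require Import all_boot zify.
Set Implicit Arguments. Unset Strict Implicit. Unset Printing Implicit Defensive.

(* Call (v, col) an incidence when colour col appears at v: an r-local colouring
   of K_n has at most r n incidences, and both endpoints of every edge carry an
   incidence with its colour.  Repeatedly discard an incidence (v, col) such that
   at most l - 2 edges vw of colour col still have (w, col) kept; each removal
   uncovers at most 2 (l - 2) ordered edges.  If the process gets stuck, the kept
   incidences of one colour span a monochromatic graph of minimum degree at least
   l - 1, which contains a cycle of length at least l by the longest-path
   argument.  Otherwise all n (n - 1) ordered edges get uncovered, so
   n (n - 1) <= 2 (l - 2) r n, which fails for n = 2 (l - 2) r + 2 <= 2 l r. *)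

Lemma sum_bool_card (T : finType) (P : pred T) : \sum_(i : T) (P i : nat) = #|P|.
Proof.
rewrite -sum1_card [RHS]big_mkcond /=; apply: eq_bigr => i _.
by rewrite unfold_in; case: (P i).
Qed.

Section LongCycle.
Variables (T : finType) (e : rel T) (S : pred T).
Hypothesis e_sym : symmetric e.

Definition nbhd (x : T) : pred T := [pred y | (y != x) && e x y && S y].

Lemma cycle_of_saturated_path d x s : 0 < d -> d <= #|nbhd x| ->
  uniq (x :: s) -> path e x s -> {subset nbhd x <= s} ->
  exists p, [/\ uniq p, cycle e p & d < size p].
Proof.
move=> d_gt0 le_d_nbhd uniq_xs path_xs nbhd_sub_s.
have [y Ny le_d_y] : exists2 y, y \in nbhd x & d <= (index y s).+1.
  apply/exists_inP; apply: contraLR le_d_nbhd; rewrite negb_exists_in -ltnNge.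
  move=> /forall_inP near.
  have sub : nbhd x \subset mem (take d.-1 s).
    apply/subsetP => y Ny; rewrite in_take ?nbhd_sub_s //.
    by have := near y Ny; rewrite -ltnNge; lia.
  apply: leq_ltn_trans (subset_leq_card sub) _.
  apply: leq_ltn_trans (card_size _) _; rewrite size_take_min; lia.
have ys := nbhd_sub_s y Ny; have lt_ys : index y s < size s by rewrite index_mem.
exists (x :: take (index y s).+1 s); split.
- move: uniq_xs => /= /andP [xNs uniq_s]; rewrite take_uniq // andbT.
  by apply: contra xNs => /mem_take.
- rewrite /cycle rcons_path take_path //= (take_nth x) // last_rcons nth_index //.
  by move: Ny; rewrite inE e_sym => /andP [/andP []].
- by rewrite /= size_take_min (minn_idPl lt_ys).
Qed.

(* Longest-path argument: extend a path in S at its head until every neighbour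
   of the head already lies on it, then close the cycle at the farthest one. *)
Lemma long_cycle_of_min_degree d x : 0 < d -> S x ->
  (forall u, S u -> d <= #|nbhd u|) ->
  exists p, [/\ uniq p, cycle e p & d < size p].
Proof.
move=> d_gt0 Sx min_deg.
have close_up y s : uniq (y :: s) -> all S (y :: s) -> path e y s ->
    ~~ [exists z in nbhd y, z \notin y :: s] ->
    exists p, [/\ uniq p, cycle e p & d < size p].
  move=> uniq_ys /andP [Sy _] path_ys /exists_inPn saturated.
  apply: (cycle_of_saturated_path d_gt0 (min_deg _ Sy) uniq_ys path_ys).
  move=> z Nz; have := saturated z Nz; rewrite negbK in_cons => /orP [/eqP zy|//].
  by move: Nz; rewrite inE zy eqxx.
suff grow m y s : #|T| - size s <= m -> uniq (y :: s) -> all S (y :: s) ->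
    path e y s -> exists p, [/\ uniq p, cycle e p & d < size p].
  by apply: (grow _ x [::]); rewrite //= Sx.
elim: m y s => [|m IHm] y s le_m uniq_ys S_ys path_ys.
all: have [/exists_inP [z Nz zNys]|] := boolP [exists z in nbhd y, z \notin y :: s];
  last exact: close_up.
- exfalso; move: le_m; apply/negP; rewrite -ltnNge subn_gt0.
  apply: leq_trans _ (max_card (mem (z :: y :: s))).
  by rewrite (card_uniqP _) /= ?zNys.
- apply: (IHm z (y :: s)); rewrite /= ?zNys ?uniq_ys ?path_ys //.
  + by move: le_m; rewrite /=; lia.
  + by move: Nz; rewrite inE => /andP [_ ->].
  + by move: Nz; rewrite inE e_sym => /andP [/andP [_ ->]].
Qed.

End LongCycle.

Section LocalColouring.
Variables (n : nat) (c : 'I_n -> 'I_n -> nat).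
Hypothesis c_sym : edge_colouring c.

Definition colour_rel (col : nat) : rel 'I_n := fun u w => c u w == col.

Lemma colour_rel_sym col : symmetric (colour_rel col).
Proof. by move=> u w; rewrite /colour_rel c_sym. Qed.

Lemma mono_cycle_of_cycle col p :
  uniq p -> cycle (colour_rel col) p -> Defs.mono_cycle (size p) c.
Proof.
case: p => [|x p] uniq_p cycle_p; first by exists (in_tuple [::]), col; split=> // [[]].
exists (in_tuple (x :: p)), col; split => // i; rewrite !(tnth_nth x) /=.
have lt_i := ltn_ord i; move: cycle_p => /(pathP x)/(_ i); rewrite size_rcons.
move=> /(_ lt_i)/eqP; rewrite -rcons_cons (nth_rcons _ (x :: p)) lt_i nth_rcons => <-.
case: (ltnP i.+1 (size (x :: p))) => [lt_Si|le_Si].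
  by rewrite modn_small //=; move: lt_Si; rewrite /= ltnS => ->.
have -> : i.+1 = size (x :: p) by apply/eqP; rewrite eqn_leq lt_i le_Si.
by rewrite modnn /= ltnn if_same.
Qed.

(* [A] is a list of the incidences [(v, col)] still kept. *)
Definition deg_in (A : seq ('I_n * nat)) v col :=
  #|nbhd (colour_rel col) [pred w | (w, col) \in A] v|.

Definition covered (A : seq ('I_n * nat)) :=
  \sum_(u : 'I_n) \sum_(w : 'I_n)
     ((u != w) && ((u, c u w) \in A) && ((w, c u w) \in A) : nat).

Lemma covered_filter A v col :
  covered A <= covered (filter (predC1 (v, col)) A) + 2 * deg_in A v col.
Proof.
pose at_v u w := (u == v) && (w \in nbhd (colour_rel col) [pred w | (w, col) \in A] v).
have sum_at_v : \sum_u \sum_w (at_v u w : nat) = deg_in A v col.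
  rewrite (bigD1 v) //= [X in _ + X]big1 ?addn0.
    by rewrite /deg_in -sum_bool_card; apply: eq_bigr => w _; rewrite /at_v eqxx.
  by move=> u uNv; rewrite big1 // => w _; rewrite /at_v (negbTE uNv).
have sum_at_v' : \sum_u \sum_w (at_v w u : nat) = deg_in A v col.
  by rewrite exchange_big.
rewrite mul2n -addnn -{1}sum_at_v -sum_at_v' -!big_split.
apply: leq_sum => u _; rewrite -!big_split; apply: leq_sum => w _ /=.
rewrite /at_v !inE !mem_filter /colour_rel.
case: (boolP ((u != w) && ((u, c u w) \in A) && ((w, c u w) \in A))) => //.
case/andP=> [/andP [uw Au] Aw].
have [[<- <-]|/negbTE uNv] := eqVneq (u, c u w) (v, col).
  by rewrite eqxx (eq_sym w) uw Aw /=; lia.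
have [[<- <-]|/negbTE wNv] := eqVneq (w, c u w) (v, col).
  by rewrite eqxx uw (c_sym w u) eqxx Au /=; lia.
by rewrite /= uw Au Aw uNv wNv; lia.
Qed.

Lemma long_mono_cycle_of_min_deg_in e A v col : (v, col) \in A ->
  (forall p, p \in A -> e < deg_in A p.1 p.2) ->
  exists k, e.+1 < k /\ Defs.mono_cycle k c.
Proof.
move=> vA high.
have [|u S_u|p [uniq_p cycle_p lt_p]] :=
  @long_cycle_of_min_degree _ (colour_rel col) [pred w | (w, col) \in A]
    (colour_rel_sym col) e.+1 v _ vA.
- by [].
- exact: high (u, col) S_u.
- by exists (size p); split; last exact: mono_cycle_of_cycle cycle_p.
Qed.

Lemma long_mono_cycle_or_covered_le e A :
  (exists k, e.+1 < k /\ Defs.mono_cycle k c) \/ covered A <= 2 * e * size A.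
Proof.
have [m] := ubnP (size A); elim: m A => // m IHm A; rewrite ltnS => le_A_m.
have [/hasP [[v col] vA /= low]|/hasPn high] := boolP (has (fun p => deg_in A p.1 p.2 <= e) A).
  set A' := filter (predC1 (v, col)) A.
  have lt_A'A : size A' < size A.
    rewrite /A' size_filter -(count_predC (pred1 (v, col)) A) -addn1 addnC.
    by rewrite leq_add2r -has_count has_pred1.
  have [long|cov_A'] := IHm A' (leq_trans lt_A'A le_A_m); first by left.
  right; apply: leq_trans (covered_filter A v col) _.
  apply: leq_trans (leq_add cov_A' (leq_mul (leqnn 2) low)) _.
  by rewrite -mulnSr leq_mul2l lt_A'A orbT.
case: A le_A_m high => [|[v col] A] _ high.
  by right; rewrite /covered big1 // => u _; rewrite big1 // => w _; rewrite in_nil andbF.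
left; apply: (@long_mono_cycle_of_min_deg_in e _ v col (mem_head _ _)).
by move=> q /high; rewrite -ltnNge.
Qed.

Definition colours_at v := undup [seq c v u | u <- enum 'I_n & u != v].

Definition incidences := [seq (v, col) | v <- enum 'I_n, col <- colours_at v].

Lemma size_incidences r : r_local r c -> size incidences <= r * n.
Proof.
move=> loc; rewrite size_allpairs_dep sumnE big_map big_enum /=.
apply: (@leq_trans (\sum_(v in 'I_n) r)); first by apply: leq_sum => v _; apply: loc.
by rewrite sum_nat_const card_ord mulnC.
Qed.

Lemma mem_incidences u w : u != w -> (u, c u w) \in incidences.
Proof.
move=> uw; apply/allpairsPdep; exists u, (c u w); split; rewrite ?mem_enum //.
by rewrite mem_undup; apply: map_f; rewrite mem_filter mem_enum andbT eq_sym.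
Qed.

Lemma covered_incidences : covered incidences = n * n.-1.
Proof.
transitivity (\sum_(u : 'I_n) n.-1); last by rewrite sum_nat_const card_ord.
apply: eq_bigr => u _; have -> : n.-1 = #|predC1 u| by rewrite cardC1 card_ord.
rewrite -sum_bool_card.
apply: eq_bigr => w _; have [<-|uw] := eqVneq u w; first by rewrite /= eqxx.
have wu : w != u by rewrite eq_sym.
by rewrite /= mem_incidences // (c_sym u w) mem_incidences // wu.
Qed.

End LocalColouring.

Theorem corollary2p5 (l r : nat) : 3 <= l -> 1 <= r ->
  loc_ramsey_le r l (2 * l * r).
Proof.
move=> l_ge3 r_ge1; exists (2 * (l - 2) * r).+2; split; first by nia.
move=> c c_sym c_loc.
have [[k [lt_k mono_k]]|] := long_mono_cycle_or_covered_le c_sym (l - 2) (incidences c).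
  by exists k; split => //; lia.
rewrite covered_incidences // => cov_le; exfalso.
have := leq_trans cov_le (leq_mul (leqnn _) (size_incidences c_loc)); nia.
Qed.
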